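(* Let $G=(V,E)$ be a graph with maximum degree $\Delta$ and let $W\subseteq V$ be such that the induced subgraph $\langle W\rangle$ is connected. Then for every equivalence class $\varphi$ of $\mathfrak d_{|S_v}(W)^*$ and every vertex $x\in W$ there is an edge $(x,y)\in\varphi$ with $(x,y)\in E\big(\bigcup_{v\in W}S_v\big)$. Moreover, $\mathfrak d_{|S_v}(W)^*$ has at most $\Delta$ equivalence classes.
   Context: All graphs are finite, simple and undirected. For a graph $G=(V,E)$ and $v\in V$, $E_v$ denotes the set of edges incident to $v$. For two distinct adjacent edges $e=(v,u)$, $f=(v,w)$, a square spanned by $e$ and $f$ is a $4$-cycle $v,u,x,w,v$ with $x\notin\{v,u,w\}$; it is chordless if neither $(u,w)$ nor $(v,x)$ is an edge of $G$. In a chordless square $v,u,x,w$, $(x,w)$ is the opposite edge of $(v,u)$ and $(x,u)$ is the opposite edge of $(v,w)$ (and vice versa). The relation $\delta(G)\subseteq E\times E$: $(e,f)\in\delta(G)$ iff (i) $e,f$ are distinct adjacent edges and it is not the case that $e$ and $f$ span exactly one square and that square is chordless; or (ii) $e,f$ are opposite edges of a chordless square; or (iii) $e=f$. For a relation $R$, $R^*$ is its transitive closure (finest equivalence relation containing $R$). Define $\mathfrak d_v=((E_v\times E)\cup(E\times E_v))\cap\delta(G)$ and $\mathfrak d_v^*$ the finest equivalence relation on $E$ containing $\mathfrak d_v$. Let $F_v\subseteq E\setminus E_v$ be the set of edges that are the edges not incident to $v$ of some chordless square spanned by two edges $e,e'\in E_v$ with $(e,e')\notin\mathfrak d_v^*$.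 The partial star product $S_v$ is the subgraph of $G$ with edge set $E_v\cup F_v$ and vertex set the endpoints of these edges. Define $\mathfrak d_{|S_v}=\{(e,f)\in\mathfrak d_v^*: e,f\in E(S_v)\}$ (an equivalence relation on $E(S_v)$), $\mathfrak d_{|S_v}(W)=\bigcup_{v\in W}\mathfrak d_{|S_v}$, and $\mathfrak d_{|S_v}(W)^*$ its transitive closure, an equivalence relation on $\bigcup_{v\in W}E(S_v)$. *)

(* A simple graph is a symmetric irreflexive relation
   [g : rel T] on a finite vertex type [T]; an edge is a 2-element set
   [[set x; y]] with [g x y]. Relations on edges are [rel {set T}]. *)
From HB Require Import structures.
From mathcomp Require Import all_boot all_order.
Set Implicit Arguments. Unset Strict Implicit. Unset Printing Implicit Defensive.

Section Defs.
Variable T : finType.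
Variable g : rel T.

Definition is_edge (s : {set T}) : bool :=
  [exists x, exists y, g x y && (s == [set x; y])].

(* the fourth vertices x of squares v,u,x,w spanned by (v,u),(v,w) *)
Definition squares (v u w : T) : {set T} :=
  [set x | [&& x != v, x != u, x != w, g u x & g x w]].

Definition csq (v u x w : T) : bool :=
  [&& g v u, g u x, g x w, g w v, x != v, x != u, x != w, u != w,
      ~~ g u w & ~~ g v x].

Definition delta1 (e1 e2 : {set T}) : bool :=
  (e1 != e2) &&
  [exists v, exists u, exists w,
     [&& e1 == [set v; u], e2 == [set v; w], g v u, g v w &
       ~~ ((#|squares v u w| == 1) &&
           [forall x in squares v u w, ~~ g u w && ~~ g v x])]].

Definition delta2 (e1 e2 : {set T}) : bool :=
  [exists v, exists u, exists x, exists w,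
     [&& csq v u x w, e1 == [set v; u] & e2 == [set x; w]]].

Definition delta (e1 e2 : {set T}) : bool :=
  [&& is_edge e1, is_edge e2 & [|| delta1 e1 e2, delta2 e1 e2 | e1 == e2]].

Definition dv (v : T) (e1 e2 : {set T}) : bool :=
  delta e1 e2 && ((v \in e1) || (v \in e2)).

Definition dvs (v : T) : rel {set T} :=
  connect (fun a b => dv v a b || dv v b a).

Definition inF (v : T) (f : {set T}) : bool :=
  (v \notin f) &&
  [exists u, exists x, exists w,
     [&& csq v u x w, ~~ dvs v [set v; u] [set v; w] &
         (f == [set u; x]) || (f == [set x; w])]].

Definition inS (v : T) (f : {set T}) : bool :=
  (is_edge f && (v \in f)) || inF v f.

Definition dS (v : T) (a b : {set T}) : bool :=
  [&& inS v a, inS v b & dvs v a b].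

Definition dW (W : {set T}) (a b : {set T}) : bool :=
  [exists v in W, dS v a b].

Definition DW (W : {set T}) (f : {set T}) : bool :=
  [exists v in W, inS v f].

Definition dWs (W : {set T}) : rel {set T} :=
  connect (fun a b => dW W a b || dW W b a).

Definition dWclass (W : {set T}) (e0 : {set T}) : {set {set T}} :=
  [set f | DW W f && dWs W e0 f].

Definition dWclasses (W : {set T}) : {set {set {set T}}} :=
  [set dWclass W e0 | e0 in [set e0 | DW W e0]].

Definition maxdeg : nat := \max_(v : T) #|[set u | g v u]|.

Definition induced_connected (W : {set T}) : Prop :=
  forall x y, x \in W -> y \in W ->
    connect (fun a b => [&& g a b, a \in W & b \in W]) x y.

End Defs.

From HB Require Import structures.
From mathcomp Require Import all_boot all_order.
Set Implicit Arguments. Unset Strict Implicit. Unset Printing Implicit Defensive.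

(* Say that an equivalence class of d_{|S_v}(W)^* is present at a vertex x
   when it contains an edge (x,y).  The proof has three steps.
   1. Transfer along an edge (v,w) with v in W: every edge (v,u) is
      equivalent to some edge (w,z).  Either (v,u) and (v,w) do not span
      exactly one square which is chordless, and then they are delta-related
      inside S_v; or they span the chordless square v,u,x,w, and then either
      (v,u) d_v^* (v,w), or (x,w) lies in F_v and is opposite to (v,u).
   2. Every edge of S_v is equivalent to an edge at v: an edge of F_v is an
      opposite edge of a chordless square spanned by two edges at v.
   3. Since <W> is connected, steps 1 and 2 show that every class is present
      at every x in W, which is the first claim.  Fixing x in W, the map
      y |-> class of (x,y) therefore sends the neighbours of x onto the set
      of classes, so there are at most deg x <= Delta classes. *)

Section Graph.
Variable T : finType.
Variable g : rel T.
Hypothesis gsym : symmetric g.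
Hypothesis girr : irreflexive g.

Lemma adj_neq a b : g a b -> a != b.
Proof. by apply: contraTneq => ->; rewrite girr. Qed.

Lemma edge2 a b : g a b -> is_edge g [set a; b].
Proof. by move=> gab; apply/existsP; exists a; apply/existsP; exists b; rewrite gab eqxx. Qed.

Lemma inS_incident v u : g v u -> inS g v [set v; u].
Proof. by move=> gvu; rewrite /inS edge2 // set21. Qed.

Lemma csq_adj v u x w : csq g v u x w -> [/\ g v u, g u x, g x w & g w v].
Proof. by rewrite /csq => /and4P [-> -> -> /andP []]. Qed.

Lemma csq_swap v u x w : csq g v u x w -> csq g v w x u.
Proof.
rewrite /csq => /and5P [h1 h2 h3 h4 /and5P [h5 h6 h7 h8 /andP [h9 h10]]].
by rewrite gsym h4 gsym h3 gsym h2 gsym h1 h5 h7 h6 eq_sym h8 gsym h9 h10.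
Qed.

Lemma delta_opposite v u x w : csq g v u x w -> delta g [set v; u] [set x; w].
Proof.
move=> cs; have [gvu _ gxw _] := csq_adj cs.
rewrite /delta !edge2 //=; apply/orP; right; apply/orP; left.
by apply/existsP; exists v; apply/existsP; exists u; apply/existsP; exists x;
  apply/existsP; exists w; rewrite cs !eqxx.
Qed.

Definition one_chordless_square (v u w : T) : bool :=
  (#|squares g v u w| == 1) &&
  [forall x in squares g v u w, ~~ g u w && ~~ g v x].

Lemma delta_adjacent v u w : g v u -> g v w -> u != w ->
  ~~ one_chordless_square v u w -> delta g [set v; u] [set v; w].
Proof.
move=> gvu gvw nuw hsq; rewrite /delta !edge2 //=; apply/orP; left.
apply/andP; split.
  apply: contra nuw => /eqP e; have : u \in [set v; w] by rewrite -e set22.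
  by rewrite !inE eq_sym (negbTE (adj_neq gvu)).
by apply/existsP; exists v; apply/existsP; exists u; apply/existsP; exists w;
  rewrite !eqxx gvu gvw.
Qed.

Lemma one_chordless_squareP v u w : g v u -> g w v -> u != w ->
  one_chordless_square v u w -> exists x, csq g v u x w.
Proof.
move=> gvu gwv nuw /andP [/cards1P [x Ex] /forall_inP hx].
have xin : x \in squares g v u w by rewrite Ex set11.
have /andP [nguw ngvx] := hx x xin.
move: xin; rewrite inE => /and5P [nxv nxu nxw gux gxw].
by exists x; rewrite /csq gvu gux gxw gwv nxv nxu nxw nuw nguw ngvx.
Qed.

Lemma dvs_delta v a b : delta g a b -> (v \in a) || (v \in b) -> dvs g v a b.
Proof. by move=> dab vab; apply: connect1; rewrite /dv dab vab. Qed.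

Lemma inF_opposite v u x w : csq g v u x w ->
  ~~ dvs g v [set v; u] [set v; w] -> inF g v [set x; w].
Proof.
move=> cs hd; have [_ _ _ gwv] := csq_adj cs.
have nxv : x != v by case/and5P: cs => _ _ _ _ /andP [].
rewrite /inF !inE negb_or eq_sym nxv eq_sym (adj_neq gwv) /=.
by apply/existsP; exists u; apply/existsP; exists x; apply/existsP; exists w;
  rewrite cs hd eqxx orbT.
Qed.

Lemma inF_incident v f : inF g v f -> exists2 u, g v u & dvs g v [set v; u] f.
Proof.
rewrite /inF => /andP [_ /existsP [u /existsP [x /existsP [w /and3P [cs _ hf]]]]].
case/orP: hf => /eqP ->.
- have cs' := csq_swap cs; have [gvw _ _ _] := csq_adj cs'.
  exists w => //; rewrite [[set u; x]]setUC; apply: dvs_delta; first exact: delta_opposite.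
  by rewrite set21.
- have [gvu _ _ _] := csq_adj cs.
  by exists u => //; apply: dvs_delta; [exact: delta_opposite | rewrite set21].
Qed.

Section Star.
Variable W : {set T}.

Lemma dWs_sym : symmetric (dWs g W).
Proof. by apply: sym_connect_sym => a b; exact: orbC. Qed.

Lemma dWs_at v a b : v \in W -> inS g v a -> inS g v b -> dvs g v a b ->
  dWs g W a b.
Proof.
by move=> vW ha hb hab; apply: connect1; apply/orP; left; apply/existsP;
  exists v; rewrite vW /dS ha hb hab.
Qed.

Lemma transfer v w u : v \in W -> g v w -> g v u ->
  exists2 z, g w z & dWs g W [set v; u] [set w; z].
Proof.
move=> vW gvw gvu; have gwv : g w v by rewrite gsym.
have via_v : dvs g v [set v; u] [set v; w] ->
    exists2 z, g w z & dWs g W [set v; u] [set w; z].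
  by move=> h; exists v => //; rewrite [[set w; v]]setUC; apply: (dWs_at vW); rewrite ?inS_incident.
have [-> | nuw] := eqVneq u w; first by exists v; rewrite // [[set w; v]]setUC /dWs connect0.
have [hsq | hsq] := boolP (one_chordless_square v u w); last first.
  by apply: via_v; apply: dvs_delta; [exact: delta_adjacent | rewrite set21].
have [x cs] := one_chordless_squareP gvu gwv nuw hsq.
have [hd | hd] := boolP (dvs g v [set v; u] [set v; w]); first exact: via_v.
have [_ _ gxw _] := csq_adj cs.
exists x; first by rewrite gsym.
rewrite [[set w; x]]setUC; apply: (dWs_at vW); rewrite ?inS_incident //.
  by rewrite /inS (inF_opposite cs hd) orbT.
by apply: dvs_delta; [exact: delta_opposite | rewrite set21].
Qed.

Definition present (e0 : {set T}) (x : T) : Prop :=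
  exists2 y, g x y & dWs g W e0 [set x; y].

Lemma present_connected e0 v x : induced_connected g W -> v \in W -> x \in W ->
  present e0 v -> present e0 x.
Proof.
move=> Wconn vW xW; have /connectP [p pp ->] := Wconn v x vW xW.
elim: p v vW pp => [//|a p IH] v vW /= /andP [/and3P [gva _ aW] pp] [u gvu h].
apply: (IH a aW pp); have [z gaz h'] := transfer vW gva gvu.
by exists z => //; exact: connect_trans h h'.
Qed.

Lemma present_somewhere e0 : DW g W e0 -> exists2 v, v \in W & present e0 v.
Proof.
case/existsP=> v /andP [vW hS]; exists v => //.
case/orP: (hS) => [/andP [/existsP [a /existsP [b /andP [gab /eqP E]]] ve] | hF].
  move: ve; rewrite E => /set2P [->|->]; first by exists b; rewrite ?/dWs ?connect0.
  by exists a; rewrite 1?gsym // setUC /dWs connect0.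
have [u gvu h] := inF_incident hF.
by exists u => //; rewrite dWs_sym; apply: (dWs_at vW); rewrite ?inS_incident.
Qed.

Lemma present_everywhere e0 x : induced_connected g W -> DW g W e0 ->
  x \in W -> present e0 x.
Proof.
move=> Wconn h xW; have [v vW hv] := present_somewhere h.
exact: present_connected hv.
Qed.

Lemma DW_incident v u : v \in W -> g v u -> DW g W [set v; u].
Proof. by move=> vW gvu; apply/existsP; exists v; rewrite vW inS_incident. Qed.

Lemma dWclass_eq a b : dWs g W a b -> dWclass g W a = dWclass g W b.
Proof.
move=> hab; apply/setP=> f; rewrite !inE; congr (_ && _).
by apply: same_connect => //; exact: dWs_sym.
Qed.

End Star.

Lemma deg_le_maxdeg x : #|[set u | g x u]| <= maxdeg g.
Proof. exact: (leq_bigmax (F := fun v => #|[set u | g v u]|) x). Qed.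

End Graph.

Theorem lemma3p5 (T : finType) (g : rel T)
  (gsym : symmetric g) (girr : irreflexive g)
  (W : {set T}) (Wconn : induced_connected g W) :
  (forall phi, phi \in dWclasses g W ->
     forall x, x \in W -> exists y, ([set x; y] \in phi) && DW g W [set x; y])
  /\ #|dWclasses g W| <= maxdeg g.
Proof.
split.
  move=> phi /imsetP [e0]; rewrite inE => h -> x xW.
  have [y gxy hy] := present_everywhere gsym girr Wconn h xW.
  by exists y; rewrite inE hy !DW_incident.
have [W0 | [x xW]] := set_0Vmem W.
  suff -> : dWclasses g W = set0 by rewrite cards0.
  apply/setP=> c; rewrite inE; apply/negP=> /imsetP [e0].
  by rewrite inE => /existsP [v]; rewrite W0 inE.
have onto : dWclasses g W \subset [set dWclass g W [set x; y] | y in [set u | g x u]].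
  apply/subsetP=> c /imsetP [e0]; rewrite inE => h ->.
  have [y gxy hy] := present_everywhere gsym girr Wconn h xW.
  by apply/imsetP; exists y; rewrite ?inE // (dWclass_eq hy).
rewrite (leq_trans (subset_leq_card onto)) //.
exact: leq_trans (leq_imset_card _ _) (deg_le_maxdeg _ _).
Qed.
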